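(* Let $\mathcal{G}$ and $\mathcal{G}'$ be abstract GKM graphs of types $(r,n)$ and $(r,n')$ for the same compact torus $T$ of rank $r$. Then $H_T^*(\mathcal{G})$ and $H_T^*(\mathcal{G}')$ are isomorphic as $H^*(BT)$-algebras if and only if $\mathcal{G}$ and $\mathcal{G}'$ are isomorphic as GKM graphs.
   Context: Let $T$ be a compact torus of rank $r$, so $H^*(BT)=\mathbb{Z}[x_1,\dots,x_r]$ with $\deg x_i=2$. An abstract GKM graph of type $(r,n)$ is a finite $n$-valent undirected graph (multi-edges allowed, no loops) with vertex set $\mathcal{V}$ and set of directed edges $\mathcal{E}$, together with an axial function $\alpha\colon\mathcal{E}\to H^2(BT)$ satisfying: $\alpha(\overline{e})=\pm\alpha(e)$ (where $\overline{e}$ is $e$ reversed); $\alpha(e),\alpha(e')$ are linearly independent over $\mathbb{Z}$ whenever $e\neq e'$ have the same initial vertex; and the coefficients of each $\alpha(e)$ have gcd $1$. Moreover it must admit a parallel transport: a family of bijections $\mathcal{P}_e\colon\mathcal{E}_{i(e)}\to\mathcal{E}_{t(e)}$ (where $\mathcal{E}_p$ denotes the directed edges with initial point $p$, and $i(e),t(e)$ the initial and terminal points of $e$) with $\mathcal{P}_{\overline{e}}=\mathcal{P}_e^{-1}$, $\mathcal{P}_e(e)=\overline{e}$, and $\alpha(\mathcal{P}_e(e'))-\alpha(e')\in\mathbb{Z}\,\alpha(e)$. The graph equivariant cohomology is $H_T^*(\mathcal{G})=\{f\colon\mathcal{V}\to H^*(BT)\mid \alpha(e)\text{ divides } f(i(e))-f(t(e))\text{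 for all }e\in\mathcal{E}\}$, a graded $H^*(BT)$-subalgebra of all functions $\mathcal{V}\to H^*(BT)$. For distinct vertices $p,q$ let $P_{pq}=\prod_{e\in\mathcal{E}_{pq}}\alpha(e)$, where $\mathcal{E}_{pq}$ is the set of directed edges from $p$ to $q$. An isomorphism $\mathcal{G}'\to\mathcal{G}$ of GKM graphs is a bijection $\varphi_{\mathcal{V}}\colon\mathcal{V}'\to\mathcal{V}$ with $P_{\varphi_{\mathcal{V}}(p')\varphi_{\mathcal{V}}(q')}=\pm P_{p'q'}$ for all vertices $p',q'$ of $\mathcal{G}'$. *)

From HB Require Import structures.
From mathcomp Require Import all_boot all_order all_algebra.
From mathcomp Require Import mpoly.
Set Implicit Arguments. Unset Strict Implicit. Unset Printing Implicit Defensive.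
Import Order.TTheory GRing.Theory Num.Theory.
Local Open Scope ring_scope.

(* H^*(BT) for a torus of rank r : integer polynomials in x_0..x_{r-1}
   (each x_i of cohomological degree 2). *)
Notation HBT r := {mpoly int[r]}.

(* H^2(BT) is the free abelian group Z^r of integral linear forms;
   an element is given by its coefficient row vector. *)
Notation H2BT r := 'rV[int]_r.

Definition lin (r : nat) (v : H2BT r) : HBT r :=
  \sum_(i < r) (v 0 i)%:MP * 'X_i.

Definition dvdH (r : nat) (a b : HBT r) : Prop := exists q : HBT r, b = q * a.

(* Raw data of a (multi)graph with an axial function:
   vertices, directed edges, initial/terminal point, reversal, axial function. *)
Record gkm_data (r : nat) := GkmData {
  gV : finType;
  gE : finType;
  gi : gE -> gV;
  gt : gE -> gV;
  grev : gE -> gE;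
  galpha : gE -> H2BT r
}.
Arguments gV {r} g.
Arguments gE {r} g.
Arguments gi {r} g _.
Arguments gt {r} g _.
Arguments grev {r} g _.
Arguments galpha {r} g _.

Definition Zindep (r : nat) (a b : H2BT r) : Prop :=
  forall k l : int, k *: a + l *: b = 0 -> k = 0 /\ l = 0.

Definition is_gkm (r n : nat) (G : gkm_data r) : Prop :=
  (* undirected graph: reversal is an involution without fixed points,
     swapping endpoints; no loops *)
  (forall e, grev G (grev G e) = e) /\
  (forall e, grev G e <> e) /\
  (forall e, gi G (grev G e) = gt G e) /\
  (forall e, gi G e <> gt G e) /\
  (forall p, #|[set e | gi G e == p]| = n) /\
  (forall e, galpha G (grev G e) = galpha G e \/
             galpha G (grev G e) = - galpha G e) /\
  (forall e e', e <> e' -> gi G e = gi G e' ->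
     Zindep (galpha G e) (galpha G e')) /\
  (forall e, \big[gcdz/0%Z]_(i < r) (galpha G e 0 i) = 1%Z) /\
  (* existence of a parallel transport: P e is a map E_{i(e)} -> E_{t(e)};
     P (rev e) (P e e') = e' for all e' in E_{i(e)}, applied to every edge,
     says exactly that P e is a bijection with inverse P (rev e). *)
  (exists P : gE G -> gE G -> gE G,
     forall e,
       P e e = grev G e /\
       forall e', gi G e' = gi G e ->
         gi G (P e e') = gt G e /\
         P (grev G e) (P e e') = e' /\
         exists k : int, galpha G (P e e') - galpha G e' = k *: galpha G e).

(* Graph equivariant cohomology H_T^*(G), as a subset of all functions V -> H^*(BT). *)
Definition HTG (r : nat) (G : gkm_data r) : (gV G -> HBT r) -> Prop :=
  fun f => forall e, dvdH (lin (galpha G e)) (f (gi G e) - f (gt G e)).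

Definition HT_alg_iso (r : nat) (G G' : gkm_data r) : Prop :=
  exists phi : (gV G -> HBT r) -> (gV G' -> HBT r),
    (forall f, HTG f -> HTG (phi f)) /\
    (forall f g, HTG f -> HTG g -> phi f = phi g -> f = g) /\
    (forall h, HTG h -> exists2 f, HTG f & phi f = h) /\
    (forall f g, HTG f -> HTG g -> phi (fun v => f v + g v) = (fun v => phi f v + phi g v)) /\
    (forall f g, HTG f -> HTG g -> phi (fun v => f v * g v) = (fun v => phi f v * phi g v)) /\
    (forall (c : HBT r) f, HTG f -> phi (fun v => c * f v) = (fun v => c * phi f v)) /\
    phi (fun _ => 1) = (fun _ => 1).

Definition Ppq (r : nat) (G : gkm_data r) (p q : gV G) : HBT r :=
  \prod_(e : gE G | (gi G e == p) && (gt G e == q)) lin (galpha G e).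

Definition gkm_iso (r : nat) (G' G : gkm_data r) : Prop :=
  exists phiV : gV G' -> gV G,
    bijective phiV /\
    forall p' q', p' <> q' ->
      Ppq (phiV p') (phiV q') = Ppq p' q' \/ Ppq (phiV p') (phiV q') = - Ppq p' q'.

(* A unital H^*(BT)-algebra map H_T^*(G) -> H^*(BT) is evaluation at a vertex:
   the Thom class tau_p of a vertex p (the product of the weights at p,
   supported at p) satisfies f tau_p = f(p) tau_p, and a nonzero constant is a
   combination of the tau_p, so some tau_p has nonzero image and the map sends
   f to f(p).  Hence an algebra isomorphism H_T^*(G) ~ H_T^*(G') is the
   pullback along a bijection of the vertices.  The edges from p to q with
   weight ±a are detected algebraically: there is one iff a divides
   f(p) - f(q) for every class f.  As a primitive linear form divides a product
   of primitive linear forms only if it is ± one of them, matching these edges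
   shows that the P_pq agree up to sign.  Conversely, pulling back along a
   vertex bijection that preserves the P_pq up to sign maps classes to
   classes. *)

From mathcomp Require Import all_boot all_order all_algebra.
From mathcomp Require Import mpoly ring.
From Stdlib Require Import FunctionalExtensionality.
Set Implicit Arguments. Unset Strict Implicit. Unset Printing Implicit Defensive.
Import GRing.Theory Num.Theory.
Local Open Scope ring_scope.

Local Notation "x =± y" := (x = y \/ x = - y) (at level 70, no associativity) : ring_scope.

Section SignsZmod.
Variable V : zmodType.
Implicit Types x y : V.

Lemma eqpm_sym x y : x =± y -> y =± x.
Proof. by case=> ->; [left|right; rewrite opprK]. Qed.

Definition eqpmb x y := (x == y) || (x == - y).

Lemma eqpmP x y : reflect (x =± y) (eqpmb x y).
Proof. by apply: (iffP orP) => -[] /eqP; tauto. Qed.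
End SignsZmod.

Section Signs.
Variable R : comPzRingType.
Implicit Types x y : R.

Lemma eqpmM x1 y1 x2 y2 : x1 =± y1 -> x2 =± y2 -> x1 * x2 =± y1 * y2.
Proof.
by case=> -> [] ->; rewrite ?mulrN ?mulNr ?mulrNN ?opprK; [left|right|right|left].
Qed.

Lemma eqpm_prod (I : Type) (s : seq I) (P : pred I) (F F' : I -> R) :
  (forall i, P i -> F i =± F' i) -> \prod_(i <- s | P i) F i =± \prod_(i <- s | P i) F' i.
Proof. by move=> h; apply: (big_ind2 (fun x y => x =± y)) => //; [left|exact: eqpmM]. Qed.

Lemma prod_eqpm_matching (T T' : finType) (P : pred T) (P' : pred T')
    (F : T -> R) (F' : T' -> R) (m : T -> T' -> bool) :
  (forall t, P t -> exists! t', P' t' && m t t') ->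
  (forall t', P' t' -> exists! t, P t && m t t') ->
  (forall t t', m t t' -> F t =± F' t') ->
  \prod_(t | P t) F t =± \prod_(t' | P' t') F' t'.
Proof.
move=> uP uP' mF.
have -> : \prod_(t | P t) F t = \prod_(t | P t) \prod_(t' | P' t' && m t t') F t.
  apply: eq_bigr => t /uP [t' [mt' ut']]; rewrite (big_pred1 t') // => u.
  by apply/idP/eqP => [/ut' ->|->].
rewrite (exchange_big_dep P') /=; last by move=> t t' _ /andP[].
apply: eqpm_prod => t' Pt'; have [t [mt ut]] := uP' t' Pt'.
rewrite (big_pred1 t) => [|u /=]; first by apply: mF; case/andP: mt.
by rewrite Pt'; apply/idP/eqP => [/ut ->|->].
Qed.
End Signs.

Section Divisibility.
Variable r : nat.
Implicit Types a b c : HBT r.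

Lemma dvdH0 a : dvdH a 0.
Proof. by exists 0; rewrite mul0r. Qed.

Lemma dvdHN a b : dvdH a b -> dvdH a (- b).
Proof. by move=> [q ->]; exists (- q); rewrite mulNr. Qed.

Lemma dvdHD a b c : dvdH a b -> dvdH a c -> dvdH a (b + c).
Proof. by move=> [q ->] [q' ->]; exists (q + q'); rewrite mulrDl. Qed.

Lemma dvdH_mull a b c : dvdH a b -> dvdH a (c * b).
Proof. by move=> [q ->]; exists (c * q); rewrite mulrA. Qed.

Lemma dvdH_eqpml a a' b : a' =± a -> dvdH a b -> dvdH a' b.
Proof. by case=> -> [q ->]; [exists q | exists (- q); rewrite mulrNN]. Qed.

Lemma dvdH_eqpmr a b b' : b' =± b -> dvdH a b -> dvdH a b'.
Proof. by case=> -> //; apply: dvdHN. Qed.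

Lemma dvdH_prod (T : finType) (P : pred T) (F : T -> HBT r) t :
  P t -> dvdH (F t) (\prod_(u | P u) F u).
Proof.
move=> Pt; rewrite (bigD1 t) //=.
by exists (\prod_(u | P u && (u != t)) F u); rewrite mulrC.
Qed.

End Divisibility.

Section LinearForms.
Variable r : nat.
Implicit Types a b : H2BT r.

Definition primitive a : Prop := \big[gcdz/0%Z]_(i < r) a 0 i = 1%Z.

Lemma linN a : lin (- a) = - lin a.
Proof. by rewrite /lin -sumrN; apply: eq_bigr => i _; rewrite mxE rmorphN mulNr. Qed.

Lemma lin_eqpm a b : a =± b -> lin a =± lin b.
Proof. by case=> ->; [left | right; rewrite linN]. Qed.

Lemma linZB (c d : int) a b : lin (c *: a - d *: b) = c%:MP * lin a - d%:MP * lin b.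
Proof.
rewrite /lin !mulr_sumr -sumrB; apply: eq_bigr => i _.
by rewrite !mxE rmorphB !rmorphM /=; ring.
Qed.

Lemma mcoeff_lin a j : (lin a)@_U_(j) = a 0 j.
Proof.
rewrite /lin raddf_sum (bigD1 j) //= mcoeffCM mcoeffXU eqxx mulr1 big1 ?addr0 //.
by move=> i /negPf hij; rewrite mcoeffCM mcoeffXU hij mulr0.
Qed.

Lemma lin_eq0 a : lin a = 0 -> a = 0.
Proof. by move=> h; apply/rowP => j; rewrite -mcoeff_lin h mxE mcoeff0. Qed.

Lemma primitive_neq0 a : primitive a -> a != 0.
Proof.
move=> pa; apply/eqP => a0; move: pa; rewrite a0 /primitive.
suff -> : \big[gcdz/0%Z]_(i < r) (0 : H2BT r) 0 i = 0%Z by [].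
by apply: (big_ind (eq^~ 0%Z)) => // [x y -> ->|i _]; rewrite ?mxE.
Qed.

Lemma primitive_coef_neq0 a : primitive a -> exists j, a 0 j != 0.
Proof.
move=> /primitive_neq0 /eqP a_neq0.
case: (pickP (fun j => a 0 j != 0)) => [j aj | a_eq0]; first by exists j.
by case: a_neq0; apply/rowP => j; rewrite mxE; apply/eqP/negbFE/a_eq0.
Qed.

Lemma lin_primitive_neq0 a : primitive a -> lin a != 0.
Proof. by move/primitive_neq0; apply: contraNneq => /lin_eq0 ->. Qed.

Lemma abs_gcdz_scale (I : finType) (k : int) (v : I -> int) :
  absz (\big[gcdz/0%Z]_i (k * v i)) = (absz k * absz (\big[gcdz/0%Z]_i v i))%N.
Proof.
apply: (big_ind2 (fun x y => absz x = (absz k * absz y)%N)) => [|x1 x2 y1 y2 h1 h2|i _].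
- by rewrite muln0.
- by rewrite /gcdz /= h1 h2 muln_gcdr.
- by rewrite abszM.
Qed.

Lemma primitive_proportional a b j : primitive a -> primitive b -> a 0 j != 0 ->
  a 0 j *: b = b 0 j *: a -> b =± a.
Proof.
move=> pa pb aj0 /rowP hab.
have hi i : a 0 j * b 0 i = b 0 j * a 0 i by have := hab i; rewrite !mxE.
have abs_j : absz (a 0 j) = absz (b 0 j).
  have := abs_gcdz_scale (a 0 j) (fun i => b 0 i).
  have := abs_gcdz_scale (b 0 j) (fun i => a 0 i).
  rewrite pa pb !muln1 => <- <-; congr absz; apply: eq_bigr => i _; exact: hi.
have /orP[/eqP bj|/eqP bj] : (b 0 j == a 0 j) || (b 0 j == - a 0 j).
  by rewrite -eqr_norm2 -!abszE abs_j.
- by left; apply/rowP => i; apply: (mulfI aj0); rewrite hi bj.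
- by right; apply/rowP => i; rewrite mxE; apply: (mulfI aj0); rewrite hi bj mulrN mulNr.
Qed.

(* The substitution x_i |-> a_j x_i - [i = j] lin a sends lin b to
   lin (a_j b - b_j a); it thus kills exactly the linear forms proportional to a. *)
Definition kill_lin a (j : 'I_r) : {rmorphism HBT r -> HBT r} :=
  comp_mpoly [tuple (a 0 j)%:MP * 'X_i - (i == j)%:R * lin a | i < r].

Lemma kill_lin_lin a j b : kill_lin a j (lin b) = lin (a 0 j *: b - b 0 j *: a).
Proof.
rewrite linZB {1}/lin raddf_sum /=.
under eq_bigr => i _ do
  rewrite rmorphM /= comp_mpolyC comp_mpolyXU -tnth_nth tnth_mktuple mulrBr mulrCA.
rewrite sumrB -mulr_sumr; congr (_ - _).
rewrite (bigD1 j) //= eqxx [X in _ + X]big1 ?addr0 ?mul1r // => i /negPf ->.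
by rewrite mul0r mulr0.
Qed.

Lemma kill_lin_self a j : kill_lin a j (lin a) = 0.
Proof. by rewrite kill_lin_lin subrr /lin big1 // => i _; rewrite mxE mul0r. Qed.

Lemma primitive_dvd_prod_lin a (T : finType) (P : pred T) (B : T -> H2BT r) :
  primitive a -> (forall t, P t -> primitive (B t)) ->
  dvdH (lin a) (\prod_(t | P t) lin (B t)) -> exists2 t, P t & B t =± a.
Proof.
move=> pa pB [q hq]; have [j aj0] := primitive_coef_neq0 pa.
have /eqP : kill_lin a j (\prod_(t | P t) lin (B t)) = 0.
  by rewrite hq rmorphM kill_lin_self mulr0.
rewrite rmorph_prod prodf_seq_eq0 => /hasP[t _ /andP[Pt /eqP]].
rewrite kill_lin_lin => /lin_eq0/eqP; rewrite subr_eq0 => /eqP hB.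
by exists t => //; apply: primitive_proportional pa (pB t Pt) aj0 hB.
Qed.

End LinearForms.

Lemma Zindep_eqpm r (x y : H2BT r) : Zindep x y -> ~ y =± x.
Proof.
move=> indep [] hy; rewrite {}hy in indep.
- by have := indep 1 (-1); rewrite scale1r scaleN1r addrN => /(_ erefl) [].
- by have := indep 1 1; rewrite !scale1r addrN => /(_ erefl) [].
Qed.

Section GkmGraph.
Variables (r n : nat) (G : gkm_data r).
Hypothesis hG : is_gkm n G.
Local Notation V := (gV G).
Local Notation E := (gE G).
Implicit Types (p q v : V) (e : E) (f : V -> HBT r).

Lemma gkm_revK e : grev G (grev G e) = e.
Proof. by case: hG. Qed.

Lemma gkm_init_rev e : gi G (grev G e) = gt G e.
Proof. by case: hG => _ [_ []]. Qed.

Lemma gkm_term_rev e : gt G (grev G e) = gi G e.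
Proof. by rewrite -gkm_init_rev gkm_revK. Qed.

Lemma gkm_noloop e : gi G e <> gt G e.
Proof. by case: hG => _ [_ [_ []]]. Qed.

Lemma gkm_axial_rev e : galpha G (grev G e) =± galpha G e.
Proof. by case: hG => _ [_ [_ [_ [_ []]]]]. Qed.

Lemma gkm_primitive e : primitive (galpha G e).
Proof. by case: hG => _ [_ [_ [_ [_ [_ [_ [prim _]]]]]]]; apply: prim. Qed.

Lemma gkm_edge_uniq e e' (a : H2BT r) : gi G e = gi G e' ->
  galpha G e =± a -> galpha G e' =± a -> e = e'.
Proof.
move=> hi ha ha'; case: (eqVneq e e') => // /eqP ne.
have indep : Zindep (galpha G e) (galpha G e').
  by case: hG => _ [_ [_ [_ [_ [_ [+ _]]]]]]; apply.
by case: (Zindep_eqpm indep); case: ha ha' => -> [] ->; rewrite ?opprK; tauto.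
Qed.

Lemma dvdH_axial_rev e x :
  dvdH (lin (galpha G (grev G e))) x -> dvdH (lin (galpha G e)) x.
Proof. by apply: dvdH_eqpml; apply: lin_eqpm; apply: eqpm_sym; apply: gkm_axial_rev. Qed.

Lemma HTG_const c : HTG (fun _ : V => c).
Proof. by move=> e; rewrite subrr; apply: dvdH0. Qed.

Lemma HTG_add f g : HTG f -> HTG g -> HTG (fun v => f v + g v).
Proof. by move=> hf hg e; rewrite opprD addrACA; apply: dvdHD. Qed.

Lemma HTG_scale c f : HTG f -> HTG (fun v => c * f v).
Proof. by move=> hf e; rewrite -mulrBr; apply: dvdH_mull. Qed.

Lemma HTG_indicator (N : pred V) (g : HBT r) :
  (forall e, N (gi G e) -> ~~ N (gt G e) -> dvdH (lin (galpha G e)) g) ->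
  HTG (fun v => if N v then g else 0).
Proof.
move=> hN e; case: (boolP (N (gi G e))) => hi; case: (boolP (N (gt G e))) => ht.
- by rewrite subrr; apply: dvdH0.
- by rewrite subr0; apply: hN.
- rewrite sub0r; apply/dvdHN/dvdH_axial_rev/hN; by rewrite ?gkm_init_rev ?gkm_term_rev.
- by rewrite subrr; apply: dvdH0.
Qed.

Definition euler_class p : HBT r := \prod_(e | gi G e == p) lin (galpha G e).

Definition thom_class p v : HBT r := if v == p then euler_class p else 0.

Lemma HTG_thom_class p : HTG (thom_class p).
Proof. by apply: HTG_indicator => e /eqP <- _; apply: dvdH_prod. Qed.

Lemma euler_class_neq0 p : euler_class p != 0.
Proof. by apply/prodf_neq0 => e _; apply/lin_primitive_neq0/gkm_primitive. Qed.

Lemma thom_classM f p : (fun v => f v * thom_class p v) = (fun v => f p * thom_class p v).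
Proof.
apply: functional_extensionality => v.
by rewrite /thom_class; case: eqP => [->|]; rewrite ?mulr0.
Qed.

Lemma thom_class_partition :
  (fun _ => \prod_p euler_class p) =
  (fun v => \sum_p (\prod_(q | q != p) euler_class q) * thom_class p v).
Proof.
apply: functional_extensionality => v.
rewrite [RHS](bigD1 v) //= [X in _ + X]big1 => [|p]; last first.
  by rewrite /thom_class eq_sym => /negPf ->; rewrite mulr0.
by rewrite addr0 /thom_class eqxx (bigD1 v) //= mulrC.
Qed.

End GkmGraph.

Section Characters.
Variables (r n : nat) (G : gkm_data r).
Hypothesis hG : is_gkm n G.
Local Notation V := (gV G).
Variable psi : (V -> HBT r) -> HBT r.
Hypothesis psiD : forall f g, HTG f -> HTG g -> psi (fun v => f v + g v) = psi f + psi g.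
Hypothesis psiM : forall f g, HTG f -> HTG g -> psi (fun v => f v * g v) = psi f * psi g.
Hypothesis psiZ : forall c f, HTG f -> psi (fun v => c * f v) = c * psi f.
Hypothesis psi1 : psi (fun _ => 1) = 1.

Lemma character_const c : psi (fun _ => c) = c.
Proof. by have := psiZ c (HTG_const (G := G) 1); rewrite mulr1 psi1 mulr1. Qed.

Lemma character_sum (s : seq V) (F : V -> V -> HBT r) : (forall p, HTG (F p)) ->
  HTG (fun v => \sum_(p <- s) F p v) /\
  psi (fun v => \sum_(p <- s) F p v) = \sum_(p <- s) psi (F p).
Proof.
move=> hF; elim: s => [|p s [hs IHs]].
  have -> : (fun v => \sum_(p <- [::]) F p v) = (fun _ => 0).
    by apply: functional_extensionality => v; rewrite big_nil.
  by rewrite big_nil character_const; split; first exact: HTG_const.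
have -> : (fun v => \sum_(q <- p :: s) F q v) = (fun v => F p v + \sum_(q <- s) F q v).
  by apply: functional_extensionality => v; rewrite big_cons.
by rewrite big_cons psiD // -IHs; split; first exact: HTG_add.
Qed.

Lemma character_support : exists p, psi (thom_class p) != 0.
Proof.
have [p|psi_thom0] := pickP (fun p => psi (thom_class p) != 0); first by exists p.
have := congr1 psi (thom_class_partition G).
rewrite character_const (character_sum _ (fun p => HTG_scale _ (HTG_thom_class hG p))).2.
rewrite [X in _ = X]big1 => [/eqP|p _].
  have euler_neq0 : \prod_(p : V) euler_class p != 0.
    by apply/prodf_neq0 => p _; exact: euler_class_neq0 hG p.
  by rewrite (negPf euler_neq0).
rewrite psiZ; last exact: HTG_thom_class hG p.
by rewrite (eqP (negbFE (psi_thom0 p))) mulr0.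
Qed.

Lemma character_eval q f : psi (thom_class q) != 0 -> HTG f -> psi f = f q.
Proof.
move=> psi_q hf; have hq := HTG_thom_class hG q.
have := congr1 psi (thom_classM f q); rewrite psiM // psiZ //.
by move/eqP; rewrite -subr_eq0 -mulrBl mulf_eq0 (negPf psi_q) orbF subr_eq0 => /eqP.
Qed.

End Characters.

Section EdgeRecovery.
Variables (r n : nat) (G : gkm_data r).
Hypothesis hG : is_gkm n G.
Local Notation V := (gV G).
Local Notation E := (gE G).
Variable a : H2BT r.

Local Notation axial_pm e := (eqpmb (galpha G e) a).

Definition axial_star (p v : V) :=
  (v == p) || [exists e, [&& gi G e == p, gt G e == v & axial_pm e]].

Lemma axial_star_closed p e : axial_star p (gi G e) -> axial_pm e -> axial_star p (gt G e).
Proof.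
case/orP => [/eqP <- ae|/existsP[e0 /and3P[/eqP e0p /eqP e0e /eqpmP ae0]] /eqpmP ae].
  by apply/orP; right; apply/existsP; exists e; rewrite !eqxx ae.
have -> : e = grev G e0.
  apply: (gkm_edge_uniq hG (a := a)) => //; first by rewrite (gkm_init_rev hG).
  by case: (gkm_axial_rev hG e0) => ->; case: ae0 => ->; rewrite ?opprK; tauto.
by rewrite (gkm_term_rev hG) e0p /axial_star eqxx.
Qed.

(* Otherwise the class equal, on the ±a-star of p, to the product of the
   weights other than ±a of the edges starting in that star, and to 0
   elsewhere, has f(p) - f(q) not divisible by lin a. *)
Lemma edge_of_dvdH_HTG p q : primitive a -> p <> q ->
  (forall f, HTG f -> dvdH (lin a) (f p - f q)) ->
  exists e, [/\ gi G e = p, gt G e = q & galpha G e =± a].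
Proof.
move=> pa pq dvd_pq.
have [/existsP[e /and3P[/eqP ep /eqP eq /eqpmP ae]]|no_edge] :=
  boolP [exists e, [&& gi G e == p, gt G e == q & axial_pm e]]; first by exists e.
pose g := \prod_(e | axial_star p (gi G e) && ~~ axial_pm e) lin (galpha G e).
have hg : HTG (fun v => if axial_star p v then g else 0).
  apply: (HTG_indicator hG) => e ein eout; apply: dvdH_prod; rewrite ein /=.
  by apply: contra eout; apply: axial_star_closed.
have qp : (q == p) = false by apply/eqP => /esym.
have := dvd_pq _ hg; rewrite /axial_star eqxx qp (negPf no_edge) subr0.
move/(primitive_dvd_prod_lin pa (fun e _ => gkm_primitive hG e)).
by case=> e /andP[_ /eqpmP not_ae] /not_ae.
Qed.
End EdgeRecovery.

Section Pullback.
Variables (r n n' : nat) (G G' : gkm_data r).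
Hypotheses (hG : is_gkm n G) (hG' : is_gkm n' G').
Variable s : gV G' -> gV G.
Hypothesis sP : forall p' q', p' <> q' -> Ppq (s p') (s q') =± Ppq p' q'.

Lemma HTG_pullback f : HTG f -> HTG (fun v' => f (s v')).
Proof.
move=> hf e'.
have : dvdH (lin (galpha G' e')) (Ppq (s (gi G' e')) (s (gt G' e'))).
  apply: dvdH_eqpmr (sP (gkm_noloop hG' (e := e'))) _.
  by apply: dvdH_prod; rewrite !eqxx.
case/(primitive_dvd_prod_lin (gkm_primitive hG' e') (fun e _ => gkm_primitive hG e)).
move=> e /andP[/eqP <- /eqP <-] ae; apply: dvdH_eqpml (hf e).
by apply/lin_eqpm/eqpm_sym.
Qed.
End Pullback.

Lemma gkm_iso_HT_alg_iso r n n' (G G' : gkm_data r) : is_gkm n G -> is_gkm n' G' ->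
  gkm_iso G' G -> HT_alg_iso G G'.
Proof.
move=> hG hG' [s [[s' sK s'K] sP]].
have s'P p q : p <> q -> Ppq (s' p) (s' q) =± Ppq p q.
  move=> pq; apply: eqpm_sym; have := sP (s' p) (s' q); rewrite !s'K; apply.
  by move/(can_inj s'K).
exists (fun f v' => f (s v')); do ![split] => //.
- move=> f; exact: (HTG_pullback hG hG' sP).
- move=> f1 f2 _ _ f12; apply: functional_extensionality => v.
  by rewrite -(s'K v); apply: equal_f f12 (s' v).
- move=> h hh; exists (fun v => h (s' v)); first exact (HTG_pullback hG' hG s'P hh).
  by apply: functional_extensionality => v'; rewrite sK.
Qed.

Section AlgebraIsomorphism.
Variables (r n n' : nat) (G G' : gkm_data r).
Hypotheses (hG : is_gkm n G) (hG' : is_gkm n' G').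
Local Notation V := (gV G).
Local Notation V' := (gV G').
Variable phi : (V -> HBT r) -> (V' -> HBT r).
Hypothesis phi_HTG : forall f, HTG f -> HTG (phi f).
Hypothesis phi_inj : forall f g, HTG f -> HTG g -> phi f = phi g -> f = g.
Hypothesis phi_surj : forall h, HTG h -> exists2 f, HTG f & phi f = h.
Hypothesis phiD : forall f g, HTG f -> HTG g ->
  phi (fun v => f v + g v) = (fun v' => phi f v' + phi g v').
Hypothesis phiM : forall f g, HTG f -> HTG g ->
  phi (fun v => f v * g v) = (fun v' => phi f v' * phi g v').
Hypothesis phiZ : forall c f, HTG f -> phi (fun v => c * f v) = (fun v' => c * phi f v').
Hypothesis phi1 : phi (fun _ => 1) = (fun _ => 1).

Lemma phi_support v' : exists p, phi (thom_class p) v' != 0.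
Proof.
apply: (character_support hG (psi := fun f => phi f v')).
- by move=> f1 f2 hf1 hf2 /=; rewrite phiD.
- by move=> c f1 hf1 /=; rewrite phiZ.
- by rewrite /= phi1.
Qed.

Definition vertex_map v' : V := xchoose (phi_support v').

Lemma phi_eval v' f : HTG f -> phi f v' = f (vertex_map v').
Proof.
apply: (character_eval hG (psi := fun f => phi f v')).
- by move=> f1 f2 hf1 hf2 /=; rewrite phiM.
- by move=> c f1 hf1 /=; rewrite phiZ.
- exact: xchooseP (phi_support v').
Qed.

Lemma vertex_map_inj : injective vertex_map.
Proof.
move=> v1 v2 s12; apply/eqP; apply: contraT => v12.
have [f hf phi_f] := phi_surj (HTG_thom_class hG' v1).
have : thom_class v1 v1 = thom_class v1 v2 by rewrite -phi_f !phi_eval // s12.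
rewrite /thom_class eqxx eq_sym (negPf v12) => /eqP.
by rewrite (negPf (euler_class_neq0 hG' v1)).
Qed.

Lemma vertex_map_surj p : exists v', vertex_map v' == p.
Proof.
apply/existsP; apply: contraT => /existsPn not_hit.
have thom0 : phi (thom_class p) = phi (fun _ => 0).
  apply: functional_extensionality => v'.
  rewrite !phi_eval /thom_class ?(negPf (not_hit v')) //; first exact: HTG_const.
  exact: HTG_thom_class hG p.
have /(congr1 (fun f => f p)) := phi_inj (HTG_thom_class hG p) (HTG_const 0) thom0.
by rewrite /thom_class eqxx => /eqP; rewrite (negPf (euler_class_neq0 hG p)).
Qed.

Lemma vertex_map_bij : bijective vertex_map.
Proof.
pose preim p := xchoose (vertex_map_surj p).
have preimK p : vertex_map (preim p) = p := eqP (xchooseP (vertex_map_surj p)).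
by exists preim => [v'|//]; apply: vertex_map_inj; rewrite preimK.
Qed.

Section VertexPair.
Variables (p' q' : V') (pq : p' <> q').

Lemma edge_image e' : gi G' e' = p' -> gt G' e' = q' ->
  exists e, [/\ gi G e = vertex_map p', gt G e = vertex_map q' & galpha G e =± galpha G' e'].
Proof.
move=> ei et; have spq : vertex_map p' <> vertex_map q' by move/vertex_map_inj.
apply: (edge_of_dvdH_HTG hG (gkm_primitive hG' e') spq) => f hf.
by rewrite -!phi_eval // -ei -et; apply: phi_HTG.
Qed.

Lemma edge_preimage e : gi G e = vertex_map p' -> gt G e = vertex_map q' ->
  exists e', [/\ gi G' e' = p', gt G' e' = q' & galpha G' e' =± galpha G e].
Proof.
move=> ei et; apply: (edge_of_dvdH_HTG hG' (gkm_primitive hG e) pq) => h hh.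
by have [f hf <-] := phi_surj hh; rewrite !phi_eval // -ei -et; apply: hf.
Qed.

Lemma vertex_map_Ppq : Ppq (vertex_map p') (vertex_map q') =± Ppq p' q'.
Proof.
apply: (prod_eqpm_matching (m := fun e e' => eqpmb (galpha G e) (galpha G' e'))).
- move=> e /andP[/eqP ei /eqP et]; have [e' [e'i e't ae']] := edge_preimage ei et.
  exists e'; split; first by rewrite e'i e't !eqxx; apply/eqpmP/eqpm_sym.
  move=> e2 /andP[/andP[/eqP e2i _] /eqpmP ae2].
  by apply: (gkm_edge_uniq hG' (a := galpha G e)) => //; [rewrite e'i e2i | apply: eqpm_sym].
- move=> e' /andP[/eqP e'i /eqP e't]; have [e [ei et ae]] := edge_image e'i e't.
  exists e; split; first by rewrite ei et !eqxx; apply/eqpmP.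
  move=> e2 /andP[/andP[/eqP e2i _] /eqpmP ae2].
  by apply: (gkm_edge_uniq hG (a := galpha G' e')) => //; rewrite ei e2i.
- by move=> e e' /eqpmP /lin_eqpm.
Qed.
End VertexPair.

Lemma vertex_map_gkm_iso : gkm_iso G' G.
Proof.
exists vertex_map; split; first exact: vertex_map_bij.
by move=> p' q' pq; apply: vertex_map_Ppq.
Qed.

End AlgebraIsomorphism.

Lemma HT_alg_iso_gkm_iso r n n' (G G' : gkm_data r) : is_gkm n G -> is_gkm n' G' ->
  HT_alg_iso G G' -> gkm_iso G' G.
Proof.
move=> hG hG' [phi [phi_HTG [phi_inj [phi_surj [phiD [phiM [phiZ phi1]]]]]]].
by apply: (vertex_map_gkm_iso hG hG' phi_HTG).
Qed.

Theorem theorem1p1 (r n n' : nat) (G : gkm_data r) (G' : gkm_data r) :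
  is_gkm n G -> is_gkm n' G' ->
  (HT_alg_iso G G' <-> gkm_iso G' G).
Proof.
by move=> hG hG'; split; [apply: HT_alg_iso_gkm_iso hG hG' | apply: gkm_iso_HT_alg_iso hG hG'].
Qed.
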